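(* Let $m,n,r,p,s$ be positive integers. Let $\mathbf{A}\in\mathbb{R}^{m\times n}$ and suppose $$\mathbf{A}=\mathbf{U}\mathbf{S}\mathbf{V}+\mathbf{E},$$ where $\mathbf{U}\in\mathbb{R}^{m\times r}$ has orthonormal columns ($\mathbf{U}^\top\mathbf{U}=\mathbf{I}_r$), $\mathbf{S}\in\mathbb{R}^{r\times r}$, $\mathbf{V}\in\mathbb{R}^{r\times n}$ has orthonormal rows ($\mathbf{V}\mathbf{V}^\top=\mathbf{I}_r$), and the error $\mathbf{E}\in\mathbb{R}^{m\times n}$ satisfies $\mathbf{U}^\top\mathbf{E}=\mathbf{0}$. Let $\mathbf{B}\in\mathbb{R}^{p\times n}$ be written as $$\mathbf{B}=\mathbf{P}\mathbf{V}+\mathbf{L}\mathbf{Q},$$ where $\mathbf{P}\in\mathbb{R}^{p\times r}$, $\mathbf{L}\in\mathbb{R}^{p\times s}$, and $\mathbf{Q}\in\mathbb{R}^{s\times n}$ has orthonormal rows ($\mathbf{Q}\mathbf{Q}^\top=\mathbf{I}_s$) with $\mathbf{V}\mathbf{Q}^\top=\mathbf{0}$. Define $$\mathbf{S}'=\begin{bmatrix}\mathbf{S}&\mathbf{0}\\ \mathbf{P}&\mathbf{L}\end{bmatrix}\in\mathbb{R}^{(r+p)\times(r+s)},$$ and let $\mathbf{U}'\in\mathbb{R}^{(r+p)\times q}$, $\tilde{\mathbf{S}}\in\mathbb{R}^{q\times q}$, $\mathbf{V}'\in\mathbb{R}^{q\times(r+s)}$ be any matrices (for some positive integer $q$), with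 $\mathbf{E}'=\mathbf{S}'-\mathbf{U}'\tilde{\mathbf{S}}\mathbf{V}'$. Set $$\tilde{\mathbf{A}}=\begin{bmatrix}\mathbf{A}\\ \mathbf{B}\end{bmatrix},\quad \tilde{\mathbf{U}}=\begin{bmatrix}\mathbf{U}&\mathbf{0}\\ \mathbf{0}&\mathbf{I}_p\end{bmatrix}\mathbf{U}',\quad \tilde{\mathbf{V}}=\mathbf{V}'\begin{bmatrix}\mathbf{V}\\ \mathbf{Q}\end{bmatrix}.$$ Then $$\|\tilde{\mathbf{A}}-\tilde{\mathbf{U}}\tilde{\mathbf{S}}\tilde{\mathbf{V}}\|_F^2=\|\mathbf{E}\|_F^2+\|\mathbf{E}'\|_F^2 = \|\mathbf{A}-\mathbf{U}\mathbf{S}\mathbf{V}\|_F^2+\|\mathbf{S}'-\mathbf{U}'\tilde{\mathbf{S}}\mathbf{V}'\|_F^2.$$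
   Context: $\|\cdot\|_F$ denotes the Frobenius norm; $\mathbf{I}_k$ is the $k\times k$ identity matrix and $\mathbf{0}$ denotes a zero matrix of the appropriate size. *)

From mathcomp Require Import all_boot all_order all_algebra.
From mathcomp Require Import reals.
Set Implicit Arguments. Unset Strict Implicit. Unset Printing Implicit Defensive.
Import Order.TTheory GRing.Theory Num.Theory.
Local Open Scope ring_scope.

Definition frob2 (R : realType) (m n : nat) (A : 'M[R]_(m, n)) : R :=
  \sum_(i < m) \sum_(j < n) A i j ^+ 2.

From mathcomp Require Import all_boot all_order all_algebra.
From mathcomp Require Import reals.
Import Order.TTheory GRing.Theory Num.Theory.
Local Open Scope ring_scope.

(* With W := diag(U, I_p) and Z := [V; Q], the stacked matrix is
   [A; B] = W S' Z + [E; 0]. W has orthonormal columns and Z orthonormal rows,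
   so multiplying by them preserves the Frobenius norm, and the columns of
   [E; 0] are orthogonal to the range of W. Hence
   [A; B] - Ut St Vt = W E' Z + [E; 0] is a sum of two mutually orthogonal
   terms, and Pythagoras gives ||E'||^2 + ||E||^2. *)

Section Frobenius.

Variable R : realType.

Lemma frob2_tr (k l : nat) (M : 'M[R]_(k, l)) : frob2 M = \tr (M *m M^T).
Proof.
rewrite /frob2 /mxtrace; apply: eq_bigr => i _; rewrite mxE.
by apply: eq_bigr => j _; rewrite !mxE expr2.
Qed.

Lemma frob2_col_mx (k1 k2 l : nat) (X : 'M[R]_(k1, l)) (Y : 'M[R]_(k2, l)) :
  frob2 (col_mx X Y) = frob2 X + frob2 Y.
Proof. by rewrite !frob2_tr tr_col_mx mul_col_row mxtrace_block. Qed.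

Lemma frob2_0 (k l : nat) : frob2 (0 : 'M[R]_(k, l)) = 0.
Proof. by rewrite frob2_tr mul0mx mxtrace0. Qed.

Lemma frob2D_orth (k l : nat) (X Y : 'M[R]_(k, l)) :
  X^T *m Y = 0 -> frob2 (X + Y) = frob2 X + frob2 Y.
Proof.
move=> XY0; have cross : \tr (X *m Y^T) = 0.
  by rewrite mxtrace_mulC -mxtrace_tr trmx_mul trmxK XY0 mxtrace0.
have cross' : \tr (Y *m X^T) = 0 by rewrite -mxtrace_tr trmx_mul trmxK.
rewrite !frob2_tr linearD /= mulmxDl !mulmxDr !mxtraceD cross cross'.
by rewrite addr0 add0r.
Qed.

Lemma frob2_orthonormal_mul (k k' l l' : nat) (W : 'M[R]_(k, k'))
    (X : 'M[R]_(k', l')) (Z : 'M[R]_(l', l)) :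
  W^T *m W = 1%:M -> Z *m Z^T = 1%:M -> frob2 (W *m X *m Z) = frob2 X.
Proof.
move=> WW ZZ; rewrite !frob2_tr !trmx_mul -!mulmxA [Z *m _]mulmxA ZZ mul1mx.
by rewrite mxtrace_mulC -!mulmxA WW mulmx1.
Qed.

Lemma block_diag_orthonormal_cols (k1 k2 l1 l2 : nat)
    (U1 : 'M[R]_(k1, l1)) (U2 : 'M[R]_(k2, l2)) :
  U1^T *m U1 = 1%:M -> U2^T *m U2 = 1%:M ->
  (block_mx U1 0 0 U2)^T *m block_mx U1 0 0 U2 = 1%:M.
Proof.
move=> U1U1 U2U2; rewrite tr_block_mx mulmx_block !trmx0.
by rewrite !mul0mx !mulmx0 !addr0 !add0r U1U1 U2U2 -scalar_mx_block.
Qed.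

Lemma col_mx_orthonormal_rows (k1 k2 l : nat)
    (V1 : 'M[R]_(k1, l)) (V2 : 'M[R]_(k2, l)) :
  V1 *m V1^T = 1%:M -> V2 *m V2^T = 1%:M -> V1 *m V2^T = 0 ->
  col_mx V1 V2 *m (col_mx V1 V2)^T = 1%:M.
Proof.
move=> V1V1 V2V2 V1V2; have V2V1 : V2 *m V1^T = 0.
  by rewrite -[V2]trmxK -trmx_mul V1V2 trmx0.
by rewrite tr_col_mx mul_col_row V1V1 V2V2 V1V2 V2V1 -scalar_mx_block.
Qed.

End Frobenius.

Theorem mainTheorem1 (R : realType) (m n r p s q : nat)
  (Hm : (0 < m)%N) (Hn : (0 < n)%N) (Hr : (0 < r)%N) (Hp : (0 < p)%N)
  (Hs : (0 < s)%N) (Hq : (0 < q)%N)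
  (A : 'M[R]_(m, n)) (U : 'M[R]_(m, r)) (S : 'M[R]_(r, r)) (V : 'M[R]_(r, n))
  (E : 'M[R]_(m, n))
  (B : 'M[R]_(p, n)) (P : 'M[R]_(p, r)) (L : 'M[R]_(p, s)) (Q : 'M[R]_(s, n))
  (U' : 'M[R]_(r + p, q)) (St : 'M[R]_(q, q)) (V' : 'M[R]_(q, r + s)) :
  A = U *m S *m V + E ->
  U^T *m U = 1%:M ->
  V *m V^T = 1%:M ->
  U^T *m E = 0 ->
  B = P *m V + L *m Q ->
  Q *m Q^T = 1%:M ->
  V *m Q^T = 0 ->
  let S' : 'M[R]_(r + p, r + s) := block_mx S 0 P L in
  let E' := S' - U' *m St *m V' in
  let At : 'M[R]_(m + p, n) := col_mx A B in
  let Ut : 'M[R]_(m + p, q) := block_mx U 0 0 (1%:M : 'M[R]_p) *m U' in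
  let Vt : 'M[R]_(q, n) := V' *m col_mx V Q in
  frob2 (At - Ut *m St *m Vt) = frob2 E + frob2 E' /\
  frob2 E + frob2 E' = frob2 (A - U *m S *m V) + frob2 (S' - U' *m St *m V').
Proof.
move=> hA hU hV hUE hB hQ hVQ S' E' At Ut Vt.
split; last by rewrite hA addrAC subrr add0r.
pose W : 'M[R]_(m + p, r + p) := block_mx U 0 0 1%:M.
pose Z : 'M[R]_(r + s, n) := col_mx V Q.
have hW : W^T *m W = 1%:M.
  by apply: block_diag_orthonormal_cols => //; rewrite trmx1 mul1mx.
have hZ : Z *m Z^T = 1%:M by exact: col_mx_orthonormal_rows.
have hres : At - Ut *m St *m Vt = W *m E' *m Z + col_mx E 0.
  have hAt : At = W *m S' *m Z + col_mx E 0.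
    rewrite /At /W /S' /Z mulmx_block mul_block_col !mul0mx !mulmx0 !addr0 !add0r.
    by rewrite !mul1mx mul0mx addr0 hA hB add_col_mx addr0.
  by rewrite hAt /Ut /Vt /E' !mulmxA mulmxBr mulmxBl !mulmxA addrAC.
have horth : (W *m E' *m Z)^T *m col_mx E 0 = 0.
  rewrite !trmx_mul -!mulmxA tr_block_mx mul_block_col !trmx0 !mul0mx !mulmx0.
  by rewrite hUE !addr0 col_mx0 !mulmx0.
by rewrite hres frob2D_orth // frob2_orthonormal_mul // frob2_col_mx frob2_0 addr0 addrC.
Qed.
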